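(* Let $\mathcal{Y}$ be a finite set of class labels and $T\ge 1$ an integer. Let $\mathbf{x}_T=\langle x_1,\ldots,x_T\rangle$ be a time series with true class $y\in\mathcal{Y}$, and for $1\le t\le T$ let $\mathbf{x}_t=\langle x_1,\ldots,x_t\rangle$ be its prefix of length $t$. For each $t\in\{1,\ldots,T\}$ let $h_t$ be a classifier mapping length-$t$ prefixes to $\mathcal{Y}$, and write $\hat{y}_t=h_t(\mathbf{x}_t)$. Let $\mathrm{C}_m:\mathcal{Y}\times\mathcal{Y}\to\mathbb{R}$ be a misclassification cost ($\mathrm{C}_m(\hat{y}\mid y)$ is the cost of predicting $\hat{y}$ when the true class is $y$), let $\mathrm{C}_d:\{1,\ldots,T\}\to\mathbb{R}$ be a delay cost, and let $\mathrm{C}_{cd}:\mathcal{Y}\times\mathcal{Y}\to\mathbb{R}$ be a cost of changing decision with $\mathrm{C}_{cd}(\hat{y}\mid\hat{y})=0$ for all $\hat{y}\in\mathcal{Y}$ and $\mathrm{C}_{cd}(\hat{y}\mid\hat{y}')>0$ for all $\hat{y}\neq\hat{y}'$ in $\mathcal{Y}$. A sequence of decisions is $\mathcal{D}_\ell=\langle \hat{y}_{t_1},\ldots,\hat{y}_{t_\ell}\rangle$ with $\ell\ge 1$, decision times $1\le t_1<t_2<\cdots<t_\ell\le T$ and $\hat{y}_{t_i}=h_{t_i}(\mathbf{x}_{t_i})$; let $\mathbb{D}_T$ denote the set of all such sequences. Its cost is $$g(\mathcal{D}_\ell\mid\mathbf{x}_T,y)=\mathrm{C}_m(\hat{y}_{t_\ell}\mid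 y)+\mathrm{C}_d(t_\ell)+\sum_{i=1}^{\ell-1}\mathrm{C}_{cd}(\hat{y}_{t_{i+1}}\mid\hat{y}_{t_i}).$$ Then an optimal sequence of decisions (a minimizer of $g(\cdot\mid\mathbf{x}_T,y)$ over $\mathbb{D}_T$) is given by a one-decision sequence $\langle \hat{y}_{t^\star}\rangle$, where $t^\star$ is any element of $$\operatorname*{ArgMin}_{1\le t\le T}\bigl\{\mathrm{C}_m(\hat{y}_t\mid y)+\mathrm{C}_d(t)\bigr\}.$$
   Context: Setting: early classification of time series in a revocable regime. A decision maker observing the time series up to time $t$ may output the prediction $h_t(\mathbf{x}_t)$ and may later change its prediction (each change from one label to a different label incurs the change-of-decision cost); the final cost is the misclassification cost of the last prediction, plus the delay cost at the time of the last prediction, plus the sum of the change-of-decision costs between consecutive predictions. The theorem considers a decision maker who knows the true class $y$ but can only output predictions produced by the classifiers $h_t$. *)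

From mathcomp Require Import all_boot all_order all_algebra.
Set Implicit Arguments. Unset Strict Implicit. Unset Printing Implicit Defensive.
Import Order.TTheory GRing.Theory Num.Theory.
Local Open Scope ring_scope.

Section Defs.
Variables (R : realFieldType) (Y : finType) (X : Type) (T : nat).
Variable (x : T.-tuple X).
Variable (h : forall t : nat, seq X -> Y).

Definition prefix (t : nat) : seq X := take t x.

Definition pred_at (t : nat) : Y := h t (prefix t).

(* a sequence of decisions is given by its decision times t_1 < ... < t_l,
   l >= 1, all in {1..T}; predictions are hat y_{t_i} = h_{t_i}(x_{t_i}). *)
Definition is_decision_seq (s : seq nat) : bool :=
  [&& (0 < size s)%N, sorted ltn s & all (fun t => (1 <= t <= T)%N) s].

(* Cm yh y : misclassification cost of predicting yh when the truth is y;
   Cd t : delay cost; Ccd yn yo : cost of changing decision from yo to yn,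
   i.e. C_cd(yn | yo). *)
Definition decision_cost (Cm : Y -> Y -> R) (Cd : nat -> R) (Ccd : Y -> Y -> R)
  (y : Y) (s : seq nat) : R :=
  let tl := last 0%N s in
  Cm (pred_at tl) y + Cd tl +
  \sum_(i < (size s).-1) Ccd (pred_at (nth 0%N s i.+1)) (pred_at (nth 0%N s i)).

Definition is_argmin_time (Cm : Y -> Y -> R) (Cd : nat -> R) (y : Y) (t : nat) : Prop :=
  (1 <= t <= T)%N /\
  forall t', (1 <= t' <= T)%N -> Cm (pred_at t) y + Cd t <= Cm (pred_at t') y + Cd t'.
End Defs.

(* Costs of changing decision are nonnegative, so dropping every decision
   but the last one can only lower the cost of a sequence; what remains is
   Cm(hat y_t | y) + Cd(t) for the last decision time t, which is at least its
   minimum over 1 <= t <= T, attained by the single decision at t*. *)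

From mathcomp Require Import all_boot all_order all_algebra.
Set Implicit Arguments. Unset Strict Implicit. Unset Printing Implicit Defensive.
Import Order.TTheory GRing.Theory Num.Theory.
Local Open Scope ring_scope.

Lemma zero_diag_pos_offdiag_ge0 (R : numDomainType) (A : eqType) (c : A -> A -> R) :
  (forall a, c a a = 0) -> (forall a b, a != b -> 0 < c a b) ->
  forall a b, 0 <= c a b.
Proof.
move=> c0 cpos a b.
by case: (eqVneq a b) => [->|/cpos/ltW //]; rewrite c0.
Qed.

Lemma is_decision_seq1 (T t : nat) : (1 <= t <= T)%N -> is_decision_seq T [:: t].
Proof. by rewrite /is_decision_seq /= andbT. Qed.

Lemma is_decision_seq_last (T : nat) (s : seq nat) :
  is_decision_seq T s -> (1 <= last 0 s <= T)%N.
Proof.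
case: s => [|t s] /and3P[// _ _ /allP in_range].
exact/in_range/mem_last.
Qed.

Section DecisionCost.
Variables (R : realFieldType) (Y : finType) (X : Type) (T : nat).
Variables (x : T.-tuple X) (h : forall t : nat, seq X -> Y).
Variables (Cm : Y -> Y -> R) (Cd : nat -> R) (Ccd : Y -> Y -> R) (y : Y).

Lemma decision_cost1 (t : nat) :
  decision_cost x h Cm Cd Ccd y [:: t] = Cm (pred_at x h t) y + Cd t.
Proof. by rewrite /decision_cost big_ord0 addr0. Qed.

Lemma decision_cost_ge_last (s : seq nat) :
  (forall a b, 0 <= Ccd a b) ->
  Cm (pred_at x h (last 0 s)) y + Cd (last 0 s) <= decision_cost x h Cm Cd Ccd y s.
Proof. by move=> Ccd_ge0; rewrite lerDl sumr_ge0. Qed.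

End DecisionCost.

Theorem theorem1 (R : realFieldType) (Y : finType) (X : Type) (T : nat)
  (hT : (1 <= T)%N) (x : T.-tuple X) (y : Y) (h : forall t : nat, seq X -> Y)
  (Cm : Y -> Y -> R) (Cd : nat -> R) (Ccd : Y -> Y -> R)
  (Ccd0 : forall a : Y, Ccd a a = 0)
  (Ccdpos : forall a b : Y, a != b -> 0 < Ccd a b)
  (tstar : nat) (Htstar : is_argmin_time x h Cm Cd y tstar) :
  is_decision_seq T [:: tstar] /\
  forall s : seq nat, is_decision_seq T s ->
    decision_cost x h Cm Cd Ccd y [:: tstar] <= decision_cost x h Cm Cd Ccd y s.
Proof.
have [tstar_in_range tstar_min] := Htstar.
split; first exact: is_decision_seq1.
move=> s /is_decision_seq_last last_in_range.
have Ccd_ge0 := zero_diag_pos_offdiag_ge0 Ccd0 Ccdpos.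
rewrite decision_cost1.
apply: le_trans (tstar_min _ last_in_range) _.
exact: decision_cost_ge_last Ccd_ge0.
Qed.
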